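(* Let $L\ge 2$, $k\ge 2$ be integers, $\kappa:\{1,\dots,k-1\}\times\mathbb{N}\to\{0,\dots,L-1\}$ a map, and let $(b(n))_{n=0}^\infty$ be the $(L,k,\kappa)$-TM sequence over the letters $a_j=\exp\frac{2\pi\sqrt{-1}\,j}{L}$, $0\le j\le L-1$. Let $(a(n))_{n=0}^\infty$ be the sequence with $a(0)=0$, $0\le a(n)\le L-1$ and $a(n)\equiv\sum_{y=0}^\infty\sum_{s=1}^{k-1}\kappa(s,y)\,d(n;sk^y)\pmod L$. Then for every $n\ge 0$, $$\frac{L}{2\pi\sqrt{-1}}\log b(n)\equiv a(n)\pmod L$$ (for any determination of the logarithm).
   Context: $\mathbb{N}$ is the set of non-negative integers. Given pairwise distinct complex numbers $a_0,\dots,a_{L-1}$, let $f$ be the map on $\{a_0,\dots,a_{L-1}\}$ with $f(a_i)=a_{i+1}$ (indices modulo $L$), extended letterwise to finite words; $f^j$ its $j$-fold iterate, $f^0$ the identity. Define $A_0=a_0$ and $A_{n+1}=A_n\,f^{\kappa(1,n)}(A_n)\cdots f^{\kappa(k-1,n)}(A_n)$ (concatenation); $A_n$ is a prefix of $A_{n+1}$, and the infinite word $A_\infty=\lim A_n$ indexed from $0$ is the $(L,k,\kappa)$-TM sequence. Every $n\ge1$ has a unique $k$-adic expansion $n=\sum_{q=1}^r s_{n,q}k^{w_n(q)}$ with $1\le s_{n,q}\le k-1$, $0\le w_n(1)<\dots<w_n(r)$; $d(n;sk^y)=1$ if some $q$ has $s_{n,q}=s$ and $w_n(q)=y$, and $d(n;sk^y)=0$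 otherwise. *)

From Stdlib Require Import Reals Lia List ZArith.
From Coquelicot Require Import Coquelicot.
Import ListNotations.

Definition cexp (z : C) : C :=
  (exp (fst z) * cos (snd z), exp (fst z) * sin (snd z))%R.

Definition letter (L j : nat) : C :=
  cexp (0%R, (2 * PI * INR j / INR L)%R).

Local Open Scope nat_scope.

(* Words are represented by the list of indices j of their letters a_j;
   f^j acts on the index i as i |-> (i + j) mod L. *)
Definition fpow (L j : nat) (w : list nat) : list nat :=
  map (fun i => (i + j) mod L) w.

Fixpoint tm_word (L k : nat) (kappa : nat -> nat -> nat) (n : nat) : list nat :=
  match n with
  | 0 => [0%nat]
  | S m => let A := tm_word L k kappa m in
           (A ++ concat (map (fun s => fpow L (kappa s m) A) (seq 1 (k - 1))))%list
  end.

Definition kdigit (k n y : nat) : nat := (n / k ^ y) mod k.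

Definition dterm (k n s y : nat) : nat :=
  if andb (1 <=? s) (kdigit k n y =? s) then 1 else 0.

(* sum_{y >= 0} sum_{s=1}^{k-1} kappa(s,y) d(n; s k^y); the terms with y > n
   vanish since k^y > n for k >= 2, so the sum is over y = 0..n. *)
Definition nat_sum (l : list nat) : nat := fold_right Nat.add 0 l.

Definition kappa_sum (k : nat) (kappa : nat -> nat -> nat) (n : nat) : nat :=
  nat_sum (map (fun y =>
    nat_sum (map (fun s => kappa s y * dterm k n s y) (seq 1 (k - 1))))
    (seq 0 (S n))).

From Stdlib Require Import Reals Lra Lia List ZArith.
From Coquelicot Require Import Coquelicot.

(* The word A_m has length k^m, and its n-th letter (n < k^m) is the index
   sum_{y < m} kappa(d_y, y) mod L, where d_y is the y-th base-k digit of n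
   (with kappa(0, y) read as 0): indeed the block of A_{m+1} with top digit
   q >= 1 is f^{kappa(q, m)}(A_m), which adds kappa(q, m) to every index.
   Since n < k^(n+1), the n-th letter of the infinite word is therefore
   a_{a(n)}, and every logarithm of exp(2 pi i a(n) / L) is
   2 pi i (a(n) + L t) / L for some integer t. *)

Lemma exp_eq_1 (x : R) : exp x = 1%R -> x = 0%R.
Proof. intro Hx. apply exp_inv. now rewrite exp_0. Qed.

Lemma cos_sin_eq_2PI_periodic (y th : R) :
  cos y = cos th -> sin y = sin th -> exists t : Z, y = (th + 2 * PI * IZR t)%R.
Proof.
  intros Hc Hs.
  set (u := ((y - th) / 2)%R).
  assert (Hcos : cos (2 * u) = 1%R).
  { replace (2 * u)%R with (y - th)%R by (unfold u; field).
    rewrite cos_minus, Hc, Hs. pose proof (sin2_cos2 th) as E. unfold Rsqr in E. lra. }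
  rewrite cos_2a_sin in Hcos.
  assert (Hsin : sin u = 0%R) by nra.
  destruct (sin_eq_0_0 u Hsin) as [t Ht].
  exists t. unfold u in Ht. lra.
Qed.

Lemma cexp_eq_imag (w : C) (th : R) : cexp w = cexp (0%R, th) ->
  fst w = 0%R /\ exists t : Z, snd w = (th + 2 * PI * IZR t)%R.
Proof.
  destruct w as [x y]; unfold cexp; cbn [fst snd]; intro H.
  injection H; rewrite exp_0, !Rmult_1_l; intros Hs Hc.
  assert (Hx : exp x = 1%R).
  { (* compare the moduli: |cexp (x, y)|^2 = exp x ^ 2 *)
    assert (E : (exp x * exp x = 1)%R).
    { pose proof (sin2_cos2 y) as P1. pose proof (sin2_cos2 th) as P2.
      unfold Rsqr in *. rewrite <- Hs, <- Hc in P2. nra. }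
    pose proof (exp_pos x). nra. }
  apply exp_eq_1 in Hx; subst x.
  rewrite exp_0, !Rmult_1_l in Hs, Hc.
  split; [reflexivity | now apply cos_sin_eq_2PI_periodic].
Qed.

Lemma scaled_log_letter (L j : nat) (w : C) : (0 < L)%nat ->
  cexp w = letter L j ->
  exists t : Z, (RtoC (INR L) * w / (RtoC (2 * PI) * Ci))%C =
                RtoC (IZR (Z.of_nat j + Z.of_nat L * t)).
Proof.
  intros HL Hw.
  destruct (cexp_eq_imag w _ Hw) as [Hx [t Hy]].
  exists t. destruct w as [x y]; cbn [fst snd] in Hx, Hy; subst x y.
  rewrite plus_IZR, mult_IZR, <- !INR_IZR_INZ.
  assert (INR L <> 0%R) by (apply not_0_INR; lia).
  pose proof PI_RGT_0.
  unfold Cdiv, Cmult, Cinv, Ci, RtoC; cbn [fst snd].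
  f_equal; field; lra.
Qed.

Section Digits.
Local Open Scope nat_scope.
Variable k : nat.
Hypothesis k_gt0 : 0 < k.

Lemma kdigit_lt (n y : nat) : kdigit k n y < k.
Proof. apply Nat.mod_upper_bound; lia. Qed.

Lemma kdigit_small (n y : nat) : n < k ^ y -> kdigit k n y = 0.
Proof.
  intro Hn. unfold kdigit. rewrite Nat.div_small by exact Hn.
  apply Nat.Div0.mod_0_l.
Qed.

Lemma kdigit_top_block (q r m : nat) : q < k -> r < k ^ m ->
  kdigit k (q * k ^ m + r) m = q.
Proof.
  intros Hq Hr. unfold kdigit.
  rewrite Nat.div_add_l by (apply Nat.pow_nonzero; lia).
  rewrite Nat.div_small, Nat.add_0_r by exact Hr.
  now apply Nat.mod_small.
Qed.

Lemma kdigit_low_block (q r m y : nat) : y < m ->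
  kdigit k (q * k ^ m + r) y = kdigit k r y.
Proof.
  intro Hy. unfold kdigit.
  assert (Hkm : k ^ m = k ^ (m - y - 1) * k * k ^ y).
  { rewrite (Nat.mul_comm _ k), <- Nat.pow_succ_r', <- Nat.pow_add_r. f_equal. lia. }
  replace (q * k ^ m + r) with (r + (q * k ^ (m - y - 1) * k) * k ^ y) by nia.
  rewrite Nat.div_add by (apply Nat.pow_nonzero; lia).
  now rewrite Nat.Div0.mod_add.
Qed.

End Digits.

Lemma lt_pow_succ (k n : nat) : (2 <= k)%nat -> (n < k ^ S n)%nat.
Proof.
  intro Hk. pose proof (Nat.pow_gt_lin_r k n ltac:(lia)).
  rewrite Nat.pow_succ_r'. nia.
Qed.

Section ExponentSum.
Local Open Scope nat_scope.

Lemma nat_sum_app (l1 l2 : list nat) : nat_sum (l1 ++ l2) = nat_sum l1 + nat_sum l2.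
Proof. unfold nat_sum. induction l1 as [|x l1 IH]; cbn; lia. Qed.

Lemma nat_sum_indicator (f : nat -> nat) (d a len : nat) :
  nat_sum (map (fun s => f s * (if d =? s then 1 else 0)) (seq a len)) =
  if andb (a <=? d) (d <? a + len) then f d else 0.
Proof.
  unfold nat_sum.
  revert a; induction len as [|len IH]; intro a; cbn [seq map fold_right].
  - destruct (Nat.leb_spec a d), (Nat.ltb_spec d (a + 0)); cbn; lia.
  - rewrite IH.
    destruct (Nat.eqb_spec d a) as [->|Hda].
    + rewrite Nat.leb_refl.
      destruct (Nat.leb_spec (S a) a), (Nat.ltb_spec a (a + S len)); cbn; lia.
    + destruct (Nat.leb_spec a d), (Nat.leb_spec (S a) d),
        (Nat.ltb_spec d (S a + len)), (Nat.ltb_spec d (a + S len)); cbn; lia.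
Qed.

Variables (k : nat) (kappa : nat -> nat -> nat).

Definition digit_weight (n y : nat) : nat :=
  nat_sum (map (fun s => kappa s y * dterm k n s y) (seq 1 (k - 1))).

Definition kappa_partial_sum (m n : nat) : nat :=
  nat_sum (map (digit_weight n) (seq 0 m)).

Lemma kappa_sum_partial (n : nat) : kappa_sum k kappa n = kappa_partial_sum (S n) n.
Proof. reflexivity. Qed.

Lemma kappa_partial_sum_S (m n : nat) :
  kappa_partial_sum (S m) n = kappa_partial_sum m n + digit_weight n m.
Proof.
  unfold kappa_partial_sum. rewrite seq_S, map_app, nat_sum_app. cbn. lia.
Qed.

Lemma kappa_partial_sum_digits (m n r : nat) :
  (forall y, y < m -> kdigit k n y = kdigit k r y) ->
  kappa_partial_sum m n = kappa_partial_sum m r.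
Proof.
  intro Hdig. unfold kappa_partial_sum. f_equal. apply map_ext_in.
  intros y Hy. apply in_seq in Hy. unfold digit_weight, dterm.
  now rewrite Hdig by lia.
Qed.

Hypothesis k_gt0 : 0 < k.

Lemma digit_weight_kdigit (n y : nat) :
  digit_weight n y = if kdigit k n y =? 0 then 0 else kappa (kdigit k n y) y.
Proof.
  unfold digit_weight, dterm.
  (* the guard [1 <=? s] holds on the whole range [seq 1 (k - 1)] *)
  rewrite (map_ext_in _ (fun s => kappa s y * (if kdigit k n y =? s then 1 else 0))).
  2: { intros s Hs. apply in_seq in Hs.
       now replace (1 <=? s) with true by (symmetry; apply Nat.leb_le; lia). }
  rewrite nat_sum_indicator.
  pose proof (kdigit_lt k k_gt0 n y).
  destruct (Nat.eqb_spec (kdigit k n y) 0) as [->|Hd]; [reflexivity|].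
  destruct (Nat.leb_spec 1 (kdigit k n y)), (Nat.ltb_spec (kdigit k n y) (1 + (k - 1)));
    cbn; lia.
Qed.

End ExponentSum.

Section TMWord.
Local Open Scope nat_scope.

Lemma length_concat_map_const (F : nat -> list nat) (l a len : nat) :
  (forall s, length (F s) = l) -> length (concat (map F (seq a len))) = len * l.
Proof.
  intro HF. revert a; induction len as [|len IH]; intro a; cbn; auto.
  rewrite length_app, HF, IH. lia.
Qed.

Lemma nth_concat_map_const (F : nat -> list nat) (l a len q r : nat) :
  (forall s, length (F s) = l) -> q < len -> r < l ->
  nth (q * l + r) (concat (map F (seq a len))) 0 = nth r (F (a + q)) 0.
Proof.
  intro HF. revert a q; induction len as [|len IH]; intros a q Hq Hr; [lia|]. cbn.
  destruct q as [|q].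
  - rewrite app_nth1 by (rewrite HF; lia). now rewrite Nat.add_0_r.
  - rewrite app_nth2 by (rewrite HF; lia). rewrite HF.
    replace (S q * l + r - l) with (q * l + r) by lia.
    rewrite IH by lia. do 2 f_equal. lia.
Qed.

Variables (L k : nat) (kappa : nat -> nat -> nat).
Hypothesis k_gt0 : 0 < k.

Lemma length_fpow (j : nat) (w : list nat) : length (fpow L j w) = length w.
Proof. apply length_map. Qed.

Lemma nth_fpow (j r : nat) (w : list nat) : r < length w ->
  nth r (fpow L j w) 0 = (nth r w 0 + j) mod L.
Proof.
  intro Hr. unfold fpow.
  rewrite nth_indep with (d' := (0 + j) mod L) by (rewrite length_map; lia).
  apply (map_nth (fun i => (i + j) mod L)).
Qed.

Lemma tm_word_length (m : nat) : length (tm_word L k kappa m) = k ^ m.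
Proof.
  induction m as [|m IH]; [reflexivity|]. cbn [tm_word].
  rewrite length_app, (length_concat_map_const _ (k ^ m)), IH.
  - rewrite Nat.pow_succ_r'. nia.
  - intro s. now rewrite length_fpow.
Qed.

Lemma tm_word_nth (m n : nat) : n < k ^ m ->
  nth n (tm_word L k kappa m) 0 = kappa_partial_sum k kappa m n mod L.
Proof.
  revert n; induction m as [|m IH]; intros n Hn.
  - replace n with 0 by (cbn in Hn; lia). symmetry. apply Nat.Div0.mod_0_l.
  - cbn [tm_word]. rewrite kappa_partial_sum_S, digit_weight_kdigit by exact k_gt0.
    pose proof (tm_word_length m) as Hlen.
    destruct (Nat.ltb_spec n (k ^ m)) as [Hlow|Hhigh].
    + rewrite app_nth1, IH, kdigit_small by lia. now rewrite Nat.add_0_r.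
    + (* n = q k^m + r lies in the block f^{kappa(q, m)}(A_m) with 1 <= q < k *)
      set (q := n / k ^ m). set (r := n mod k ^ m).
      assert (Hpos : k ^ m <> 0) by (apply Nat.pow_nonzero; lia).
      assert (Hdec : n = q * k ^ m + r)
        by (unfold q, r; rewrite Nat.mul_comm; apply Nat.div_mod; exact Hpos).
      assert (Hr : r < k ^ m) by (apply Nat.mod_upper_bound; exact Hpos).
      rewrite Nat.pow_succ_r' in Hn.
      assert (Hq : 1 <= q < k) by nia.
      rewrite app_nth2 by lia. rewrite Hlen.
      replace (n - k ^ m) with ((q - 1) * k ^ m + r) by nia.
      rewrite (nth_concat_map_const _ (k ^ m)) by (try intro; rewrite ?length_fpow; lia).
      replace (1 + (q - 1)) with q by lia.
      rewrite nth_fpow, IH, Nat.Div0.add_mod_idemp_l by lia.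
      rewrite Hdec, kdigit_top_block by lia.
      replace (q =? 0) with false by (symmetry; apply Nat.eqb_neq; lia).
      do 2 f_equal. apply kappa_partial_sum_digits.
      intros y Hy. symmetry. now apply kdigit_low_block.
Qed.

End TMWord.

Theorem proposition2p1 (L k : nat) (kappa : nat -> nat -> nat)
  (HL : (2 <= L)%nat) (Hk : (2 <= k)%nat)
  (Hkappa : forall s y, (1 <= s <= k - 1)%nat -> (kappa s y < L)%nat)
  (b : nat -> C)
  (Hb : forall m n, (n < length (tm_word L k kappa m))%nat ->
          b n = letter L (nth n (tm_word L k kappa m) 0%nat))
  (a : nat -> nat)
  (Ha0 : a 0%nat = 0%nat)
  (HaL : forall n, (a n <= L - 1)%nat)
  (Hamod : forall n, (a n mod L = kappa_sum k kappa n mod L)%nat) :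
  forall (n : nat) (w : C), cexp w = b n ->
    exists m : Z,
      (RtoC (INR L) * w / (RtoC (2 * PI) * Ci))%C =
      RtoC (IZR ((Z.of_nat (a n) + Z.of_nat L * m)%Z)).
Proof.
  (* [Hkappa] and [Ha0] are not needed: indices are only compared mod L. *)
  intros n w Hw.
  assert (Hn : (n < k ^ S n)%nat) by now apply lt_pow_succ.
  assert (Hletter : nth n (tm_word L k kappa (S n)) 0%nat = a n).
  { rewrite tm_word_nth, <- kappa_sum_partial, <- Hamod by lia.
    apply Nat.mod_small. specialize (HaL n). lia. }
  rewrite (Hb (S n) n), Hletter in Hw by (rewrite tm_word_length; lia).
  apply scaled_log_letter; [lia | exact Hw].
Qed.
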